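(* Let $\mathbb{X},\mathbb{Y}$ be real normed linear spaces and $T\in\mathbb{B}(\mathbb{X},\mathbb{Y})$ such that: (i) $M_T=\{\pm x_0\}$ for some $x_0\in S_{\mathbb{X}}$; (ii) $Tx_0$ is a smooth point of $\mathbb{Y}$; (iii) every norming sequence $\{x_n\}$ for $T$ has a subsequence converging (in norm) to $ax_0$ for some $a\in\mathbb{R}$ with $|a|=1$. Then $T$ is a smooth point of $\mathbb{B}(\mathbb{X},\mathbb{Y})$.
   Context: All spaces are real; $\mathbb{B}(\mathbb{X},\mathbb{Y})$ has the operator norm; $S_{\mathbb{X}}$ is the unit sphere; $M_T=\{x\in S_{\mathbb{X}}:\|Tx\|=\|T\|\}$. A norming sequence for $T$ is $\{x_n\}\subseteq S_{\mathbb{X}}$ with $\|Tx_n\|\to\|T\|$. A nonzero element $x$ of a normed space $\mathbb{Z}$ is smooth if there is a unique $f\in\mathbb{Z}^*$ with $\|f\|=1$ and $f(x)=\|x\|$. *)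

From Stdlib Require Import Reals Lra Classical ClassicalEpsilon.
Open Scope R_scope.

(* Supremum of a set of reals; defaults to 0 if the set is empty or unbounded. *)
Definition Rsup (E : R -> Prop) : R :=
  match excluded_middle_informative (bound E /\ exists x, E x) with
  | left H => proj1_sig (completeness E (proj1 H) (proj2 H))
  | right _ => 0
  end.

Record NormedSpace := {
  carrier :> Type;
  vadd : carrier -> carrier -> carrier;
  vscal : R -> carrier -> carrier;
  vzero : carrier;
  vnorm : carrier -> R;
  vadd_assoc : forall u v w, vadd u (vadd v w) = vadd (vadd u v) w;
  vadd_comm : forall u v, vadd u v = vadd v u;
  vadd_zero : forall u, vadd u vzero = u;
  vadd_opp : forall u, vadd u (vscal (-1) u) = vzero;
  vscal_one : forall u, vscal 1 u = u;
  vscal_assoc : forall a b u, vscal a (vscal b u) = vscal (a * b) u;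
  vscal_distr_l : forall a u v, vscal a (vadd u v) = vadd (vscal a u) (vscal a v);
  vscal_distr_r : forall a b u, vscal (a + b) u = vadd (vscal a u) (vscal b u);
  vnorm_nonneg : forall u, 0 <= vnorm u;
  vnorm_zero : forall u, vnorm u = 0 <-> u = vzero;
  vnorm_scal : forall a u, vnorm (vscal a u) = Rabs a * vnorm u;
  vnorm_triangle : forall u v, vnorm (vadd u v) <= vnorm u + vnorm v
}.

Arguments vadd {n}. Arguments vscal {n}. Arguments vzero {n}. Arguments vnorm {n}.

Definition vsub {X : NormedSpace} (u v : X) : X := vadd u (vscal (-1) v).

(* ---- Generic smoothness, for a normed space presented by a carrier V,
   operations, a norm and a domain predicate (the elements of the space). *)
Section Generic.
Variables (V : Type) (add : V -> V -> V) (scal : R -> V -> V) (zero : V)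
          (norm : V -> R) (dom : V -> Prop).

Definition lin_functional (f : V -> R) : Prop :=
  (forall u v, dom u -> dom v -> f (add u v) = f u + f v) /\
  (forall a u, dom u -> f (scal a u) = a * f u).

Definition bdd_functional (f : V -> R) : Prop :=
  exists C, forall v, dom v -> Rabs (f v) <= C * norm v.

Definition dual_norm (f : V -> R) : R :=
  Rsup (fun r => exists v, dom v /\ norm v <= 1 /\ r = Rabs (f v)).

Definition support_functional (f : V -> R) (x : V) : Prop :=
  lin_functional f /\ bdd_functional f /\ dual_norm f = 1 /\ f x = norm x.

(* x is smooth: nonzero element of the space with a unique supporting
   functional (uniqueness as elements of the dual, i.e. on the domain). *)
Definition smooth_gen (x : V) : Prop :=
  dom x /\ x <> zero /\
  exists f, support_functional f x /\
    forall g, support_functional g x -> forall v, dom v -> g v = f v.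
End Generic.

Definition smooth_point (Y : NormedSpace) (y : Y) : Prop :=
  smooth_gen Y vadd vscal vzero vnorm (fun _ => True) y.

Definition bounded_linear (X Y : NormedSpace) (T : X -> Y) : Prop :=
  (forall u v, T (vadd u v) = vadd (T u) (T v)) /\
  (forall a u, T (vscal a u) = vscal a (T u)) /\
  (exists C, forall x, vnorm (T x) <= C * vnorm x).

Definition opnorm (X Y : NormedSpace) (T : X -> Y) : R :=
  Rsup (fun r => exists x : X, vnorm x <= 1 /\ r = vnorm (T x)).

Definition op_add (X Y : NormedSpace) (S T : X -> Y) : X -> Y :=
  fun x => vadd (S x) (T x).
Definition op_scal (X Y : NormedSpace) (a : R) (T : X -> Y) : X -> Y :=
  fun x => vscal a (T x).
Definition op_zero (X Y : NormedSpace) : X -> Y := fun _ => vzero.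

Definition smooth_operator (X Y : NormedSpace) (T : X -> Y) : Prop :=
  smooth_gen (X -> Y) (op_add X Y) (op_scal X Y) (op_zero X Y)
             (opnorm X Y) (bounded_linear X Y) T.

Definition norm_attainment_set (X Y : NormedSpace) (T : X -> Y) (x : X) : Prop :=
  vnorm x = 1 /\ vnorm (T x) = opnorm X Y T.

From Stdlib Require Import Reals Lra Classical ClassicalEpsilon FunctionalExtensionality.
Open Scope R_scope.

(* The candidate support functional of [T] is [A |-> g (A x0)], where [g] is the unique
   support functional of [Y] at [T x0].  Let [G] be any support functional of [T].  If some
   [D] with [D x0 = 0] had [G D > 0], then [||T + t D|| >= G (T + t D) = ||T|| + t G D] for
   every [t > 0]; this produces a norming sequence for [T] along which [||(T + D) x||] stays
   above [||T|| + G D / 2], whereas by (iii) a subsequence approaches [+-x0], where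
   [||(T + D) x0|| = ||T||].  Hence [G B] depends only on [B x0].  Composing [G] with the
   rank-one operators [x |-> (g (T x) / ||T||) z] then yields a support functional of [Y]
   at [T x0], which equals [g] by smoothness, so [G B = g (B x0)]. *)

Lemma Rsup_spec E : bound E -> (exists x, E x) -> is_lub E (Rsup E).
Proof.
  intros Hb He. unfold Rsup.
  destruct (excluded_middle_informative _) as [H|H]; [|tauto].
  destruct (completeness E (proj1 H) (proj2 H)) as [m Hm]; exact Hm.
Qed.

Lemma Rsup_ub E r : bound E -> E r -> r <= Rsup E.
Proof. intros Hb Hr. apply (proj1 (Rsup_spec E Hb (ex_intro _ r Hr))), Hr. Qed.

Lemma Rsup_le E M : (exists x, E x) -> (forall r, E r -> r <= M) -> Rsup E <= M.
Proof. intros He Hub. apply (proj2 (Rsup_spec E (ex_intro _ M Hub) He)); exact Hub. Qed.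

Lemma Rsup_eq E M : E M -> (forall r, E r -> r <= M) -> Rsup E = M.
Proof.
  intros HM Hub. apply Rle_antisym.
  - apply Rsup_le; [exists M|]; assumption.
  - apply Rsup_ub; [exists M|]; assumption.
Qed.

Lemma Rsup_lt E r : bound E -> (exists x, E x) -> r < Rsup E -> exists s, E s /\ r < s.
Proof.
  intros Hb He Hr. apply NNPP; intro Hn.
  enough (Rsup E <= r) by lra.
  apply Rsup_le; [exact He|]. intros s Hs.
  apply Rnot_lt_le; intro; apply Hn; exists s; auto.
Qed.

(* Rsup returns the junk value 0 on unbounded sets, so a nonzero value is an upper bound. *)
Lemma Rsup_neq0_ub E r : Rsup E <> 0 -> E r -> r <= Rsup E.
Proof.
  intros Hne Hr. revert Hne. unfold Rsup.
  destruct (excluded_middle_informative _) as [H|H]; [|tauto].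
  destruct (completeness E (proj1 H) (proj2 H)) as [m Hm]; simpl.
  intros _. apply (proj1 Hm), Hr.
Qed.

Lemma Un_cv_const c : Un_cv (fun _ => c) c.
Proof.
  intros eps Heps. exists 0%nat. intros n _.
  unfold R_dist. rewrite Rminus_diag, Rabs_R0. exact Heps.
Qed.

Lemma Un_cv_squeeze_below u w l :
  (forall n, l - w n <= u n <= l) -> Un_cv w 0 -> Un_cv u l.
Proof.
  intros Hu Hw eps Heps. destruct (Hw eps Heps) as [K HK]. exists K. intros n Hn.
  specialize (HK n Hn). specialize (Hu n). unfold R_dist in *. rewrite Rminus_0_r in HK.
  apply Rabs_def2 in HK. apply Rabs_def1; lra.
Qed.

Section NormedSpaceFacts.
Variable X : NormedSpace.
Implicit Types u v w : X.

Lemma vscal_0 u : vscal 0 u = vzero.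
Proof. apply vnorm_zero. rewrite vnorm_scal, Rabs_R0. ring. Qed.

Lemma vnorm_vzero : vnorm (@vzero X) = 0.
Proof. apply vnorm_zero; reflexivity. Qed.

Lemma vscal_vzero c : vscal c (@vzero X) = vzero.
Proof. apply vnorm_zero. rewrite vnorm_scal, vnorm_vzero. ring. Qed.

Lemma vsub_add u v : vadd (vsub u v) v = u.
Proof.
  unfold vsub. rewrite <- vadd_assoc. rewrite <- (vscal_one X v) at 2.
  rewrite <- vscal_distr_r. replace (-1 + 1) with 0 by ring. rewrite vscal_0. apply vadd_zero.
Qed.

Lemma vnorm_pos v : v <> vzero -> 0 < vnorm v.
Proof.
  intros Hv. destruct (Rle_lt_or_eq_dec _ _ (vnorm_nonneg _ v)) as [H|H]; [exact H|].
  exfalso. apply Hv, vnorm_zero. auto.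
Qed.

Lemma vnorm_normalize v : 0 < vnorm v -> vnorm (vscal (/ vnorm v) v) = 1.
Proof.
  intros Hv. rewrite vnorm_scal, Rabs_pos_eq by (left; apply Rinv_0_lt_compat, Hv).
  field. lra.
Qed.

(* [u + t w] is the convex combination [(1 - t) u + t (u + w)]. *)
Lemma vnorm_add_scal_convex t u w : 0 <= t <= 1 ->
  vnorm (vadd u (vscal t w)) <= (1 - t) * vnorm u + t * vnorm (vadd u w).
Proof.
  intros Ht.
  replace (vadd u (vscal t w)) with (vadd (vscal (1 - t) u) (vscal t (vadd u w))).
  - eapply Rle_trans; [apply vnorm_triangle|].
    rewrite !vnorm_scal, !Rabs_pos_eq by lra. lra.
  - rewrite vscal_distr_l, vadd_assoc, <- vscal_distr_r.
    replace (1 - t + t) with 1 by ring. rewrite vscal_one. reflexivity.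
Qed.
End NormedSpaceFacts.

Section OperatorNorm.
Variables X Y : NormedSpace.
Local Notation BL := (bounded_linear X Y).
Local Notation opn := (opnorm X Y).
Implicit Types A B : X -> Y.

Lemma bounded_linear_vzero A : BL A -> A vzero = vzero.
Proof. intros [_ [Hs _]]. rewrite <- (vscal_0 X vzero), Hs. apply vscal_0. Qed.

Lemma bounded_linear_add A B : BL A -> BL B -> BL (op_add X Y A B).
Proof.
  intros [Aa [As [CA HA]]] [Ba [Bs [CB HB]]]. unfold op_add. repeat split.
  - intros u v. rewrite Aa, Ba, <- !vadd_assoc. f_equal.
    rewrite !vadd_assoc. f_equal. apply vadd_comm.
  - intros a u. rewrite As, Bs, vscal_distr_l. reflexivity.
  - exists (CA + CB). intros x. eapply Rle_trans; [apply vnorm_triangle|].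
    specialize (HA x). specialize (HB x). lra.
Qed.

Lemma bounded_linear_scal c A : BL A -> BL (op_scal X Y c A).
Proof.
  intros [Aa [As [CA HA]]]. unfold op_scal. repeat split.
  - intros u v. rewrite Aa, vscal_distr_l. reflexivity.
  - intros a u. rewrite As, !vscal_assoc, Rmult_comm. reflexivity.
  - exists (Rabs c * CA). intros x. rewrite vnorm_scal, Rmult_assoc.
    apply Rmult_le_compat_l; [apply Rabs_pos | apply HA].
Qed.

Lemma opnorm_set_bound A : BL A -> bound (fun r => exists x : X, vnorm x <= 1 /\ r = vnorm (A x)).
Proof.
  intros [_ [_ [C HC]]]. exists (Rabs C). intros r [x [Hx ->]].
  specialize (HC x). pose proof (vnorm_nonneg _ x). pose proof (Rle_abs C).
  pose proof (Rabs_pos C). nra.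
Qed.

Lemma opnorm_set_inhabited A : exists r, exists x : X, vnorm x <= 1 /\ r = vnorm (A x).
Proof. exists (vnorm (A vzero)), vzero. rewrite vnorm_vzero. split; [lra | reflexivity]. Qed.

Lemma opnorm_ub A x : BL A -> vnorm x <= 1 -> vnorm (A x) <= opn A.
Proof. intros HA Hx. apply Rsup_ub; [apply opnorm_set_bound, HA | exists x; auto]. Qed.

Lemma opnorm_nonneg A : BL A -> 0 <= opn A.
Proof.
  intros HA. eapply Rle_trans; [apply vnorm_nonneg | apply (opnorm_ub A vzero HA)].
  rewrite vnorm_vzero; lra.
Qed.

Lemma opnorm_le A M : (forall x, vnorm x <= 1 -> vnorm (A x) <= M) -> opn A <= M.
Proof. intros H. apply Rsup_le; [apply opnorm_set_inhabited|]. intros r [x [Hx ->]]; auto. Qed.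

Lemma opnorm_bound A x : BL A -> vnorm (A x) <= opn A * vnorm x.
Proof.
  intros HA. destruct (Req_dec (vnorm x) 0) as [H0|H0].
  - apply vnorm_zero in H0. subst x. rewrite bounded_linear_vzero, !vnorm_vzero by exact HA. lra.
  - assert (Hx : 0 < vnorm x) by (pose proof (vnorm_nonneg _ x); lra).
    pose proof (opnorm_ub A _ HA (Req_le _ _ (vnorm_normalize X x Hx))) as Hy.
    destruct HA as [_ [Hs _]].
    rewrite Hs, vnorm_scal, Rabs_pos_eq in Hy by (left; apply Rinv_0_lt_compat, Hx).
    apply (Rmult_le_compat_l (vnorm x)) in Hy; [|lra].
    rewrite <- Rmult_assoc, Rinv_r, Rmult_1_l in Hy by lra. lra.
Qed.

Lemma opnorm_lt_unit A r : BL A -> 0 <= r -> r < opn A ->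
  exists y, vnorm y = 1 /\ r < vnorm (A y).
Proof.
  intros HA Hr Hlt.
  destruct (Rsup_lt _ r (opnorm_set_bound A HA) (opnorm_set_inhabited A) Hlt)
    as [s [[x [Hx ->]] Hs]].
  assert (Hx0 : 0 < vnorm x).
  { pose proof (opnorm_bound A x HA). pose proof (opnorm_nonneg A HA).
    pose proof (vnorm_nonneg _ x). nra. }
  exists (vscal (/ vnorm x) x). split; [apply vnorm_normalize, Hx0|].
  destruct HA as [_ [Hs' _]].
  rewrite Hs', vnorm_scal, Rabs_pos_eq by (left; apply Rinv_0_lt_compat, Hx0).
  assert (1 <= / vnorm x) by (rewrite <- Rinv_1; apply Rinv_le_contravar; lra).
  pose proof (vnorm_nonneg _ (A x)). nra.
Qed.

Lemma opnorm_scal_le c A : BL A -> opn (op_scal X Y c A) <= Rabs c * opn A.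
Proof.
  intros HA. apply opnorm_le. intros x Hx. unfold op_scal. rewrite vnorm_scal.
  apply Rmult_le_compat_l; [apply Rabs_pos|].
  pose proof (opnorm_bound A x HA). pose proof (opnorm_nonneg A HA). nra.
Qed.

Lemma vnorm_apply_shift A z w : BL A -> vnorm (A z) <= vnorm (A w) + opn A * vnorm (vsub z w).
Proof.
  intros HA. pose proof (opnorm_bound A (vsub z w) HA).
  rewrite <- (vsub_add X z w) at 1. destruct HA as [Ha _].
  rewrite Ha. eapply Rle_trans; [apply vnorm_triangle | lra].
Qed.
End OperatorNorm.

Lemma dual_norm1_le (V : Type) add scal (norm : V -> R) (dom : V -> Prop) f :
  (forall v, dom v -> 0 <= norm v) ->
  (forall c v, dom v -> dom (scal c v)) ->
  (forall c v, dom v -> norm (scal c v) <= Rabs c * norm v) ->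
  lin_functional V add scal dom f -> dual_norm V norm dom f = 1 ->
  forall v, dom v -> Rabs (f v) <= norm v.
Proof.
  intros Hnn Hdom Hscal [_ Hf] Hd v Hv. apply Rle_plus_epsilon. intros eps Heps.
  set (s := norm v + eps). assert (Hs : 0 < s) by (pose proof (Hnn v Hv); unfold s; lra).
  assert (Hs' : 0 < / s) by (apply Rinv_0_lt_compat, Hs).
  assert (H1 : Rabs (f (scal (/ s) v)) <= 1).
  { rewrite <- Hd. apply Rsup_neq0_ub; [unfold dual_norm in Hd; lra|].
    exists (scal (/ s) v). split; [auto | split; [|reflexivity]].
    eapply Rle_trans; [apply Hscal, Hv|]. rewrite Rabs_pos_eq by lra.
    apply (Rmult_le_reg_l s); [exact Hs|].
    rewrite <- Rmult_assoc, Rinv_r by lra. unfold s; lra. }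
  rewrite Hf, Rabs_mult, Rabs_pos_eq in H1 by (auto; lra).
  apply (Rmult_le_compat_l s) in H1; [|lra].
  rewrite <- Rmult_assoc, Rinv_r in H1 by lra. unfold s in *; lra.
Qed.

Lemma dual_norm1_le_vec (Y : NormedSpace) f y :
  lin_functional Y vadd vscal (fun _ => True) f -> dual_norm Y vnorm (fun _ => True) f = 1 ->
  Rabs (f y) <= vnorm y.
Proof.
  intros Hf Hd. apply (dual_norm1_le Y vadd vscal vnorm (fun _ => True) f); auto.
  - intros; apply vnorm_nonneg.
  - intros; rewrite vnorm_scal; lra.
Qed.

Lemma dual_norm1_le_op (X Y : NormedSpace) G A :
  lin_functional (X -> Y) (op_add X Y) (op_scal X Y) (bounded_linear X Y) G ->
  dual_norm (X -> Y) (opnorm X Y) (bounded_linear X Y) G = 1 ->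
  bounded_linear X Y A -> Rabs (G A) <= opnorm X Y A.
Proof.
  intros HG Hd HA.
  apply (dual_norm1_le (X -> Y) (op_add X Y) (op_scal X Y) (opnorm X Y) (bounded_linear X Y) G);
    auto.
  - apply opnorm_nonneg.
  - apply bounded_linear_scal.
  - intros; apply opnorm_scal_le; assumption.
Qed.

Definition rank_one (X Y : NormedSpace) (phi : X -> R) (z : Y) : X -> Y :=
  fun x => vscal (phi x) z.

Section RankOne.
Variables (X Y : NormedSpace) (phi : X -> R).
Local Notation R1 := (rank_one X Y phi).

Lemma rank_one_add u v : R1 (vadd u v) = op_add X Y (R1 u) (R1 v).
Proof. apply functional_extensionality. intros x. unfold rank_one, op_add. apply vscal_distr_l. Qed.

Lemma rank_one_scal a u : R1 (vscal a u) = op_scal X Y a (R1 u).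
Proof.
  apply functional_extensionality. intros x. unfold rank_one, op_scal.
  rewrite !vscal_assoc, Rmult_comm. reflexivity.
Qed.

Hypothesis phi_add : forall u v, phi (vadd u v) = phi u + phi v.
Hypothesis phi_scal : forall a u, phi (vscal a u) = a * phi u.
Hypothesis phi_le : forall x, Rabs (phi x) <= vnorm x.

Lemma rank_one_bounded_linear z : bounded_linear X Y (R1 z).
Proof.
  unfold rank_one. repeat split.
  - intros u v. rewrite phi_add. apply vscal_distr_r.
  - intros a u. rewrite phi_scal, vscal_assoc. reflexivity.
  - exists (vnorm z). intros x. rewrite vnorm_scal.
    pose proof (phi_le x). pose proof (vnorm_nonneg _ z). nra.
Qed.

Lemma opnorm_rank_one_le z : opnorm X Y (R1 z) <= vnorm z.
Proof.
  apply opnorm_le. intros x Hx. unfold rank_one. rewrite vnorm_scal.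
  pose proof (phi_le x). pose proof (vnorm_nonneg _ z). pose proof (Rabs_pos (phi x)). nra.
Qed.
End RankOne.

Definition norming_subsequences_converge (X Y : NormedSpace) (T : X -> Y) (x0 : X) : Prop :=
  forall xs : nat -> X,
    (forall n, vnorm (xs n) = 1) ->
    Un_cv (fun n => vnorm (T (xs n))) (opnorm X Y T) ->
    exists (phi : nat -> nat) (a : R),
      (forall n, (phi n < phi (S n))%nat) /\ Rabs a = 1 /\
      Un_cv (fun n => vnorm (vsub (xs (phi n)) (vscal a x0))) 0.

Section SupportFunctionals.
Variables (X Y : NormedSpace) (T : X -> Y) (x0 : X).
Local Notation BL := (bounded_linear X Y).
Local Notation opn := (opnorm X Y).
Hypothesis HT : BL T.
Hypothesis HTx0 : vnorm (T x0) = opn T.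

Variable G : (X -> Y) -> R.
Hypothesis HG : support_functional (X -> Y) (op_add X Y) (op_scal X Y) opn BL G T.

Lemma support_add_scal D t : BL D -> G (op_add X Y T (op_scal X Y t D)) = opn T + t * G D.
Proof.
  intros HD. destruct HG as [[Ga Gs] [_ [_ GT]]].
  rewrite Ga, Gs, GT by (auto; apply bounded_linear_scal, HD). reflexivity.
Qed.

(* If [G D > 0], the operators [T + t D] have norm above [||T|| + t G D / 2]; a unit
   vector witnessing this almost attains [||T||] and, by convexity of the norm in [t],
   is pushed by [T + D] strictly beyond [||T|| + G D / 2]. *)
Lemma support_escape D t : BL D -> 0 < G D -> 0 < t <= 1 ->
  exists y, vnorm y = 1 /\ opn T - t * opn D <= vnorm (T y) /\
            opn T + G D / 2 < vnorm (op_add X Y T D y).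
Proof.
  intros HD He Ht. set (e := G D) in *. set (N := opn T) in *.
  set (At := op_add X Y T (op_scal X Y t D)).
  assert (HAt : BL At) by (apply bounded_linear_add; [exact HT | apply bounded_linear_scal, HD]).
  assert (Hlt : N + t * e / 2 < opn At).
  { destruct HG as [Hl [_ [Hd _]]].
    pose proof (dual_norm1_le_op X Y G At Hl Hd HAt). pose proof (Rle_abs (G At)).
    assert (G At = N + t * e) by (apply support_add_scal, HD). nra. }
  assert (HN : 0 <= N) by (apply opnorm_nonneg, HT).
  destruct (opnorm_lt_unit X Y At (N + t * e / 2) HAt ltac:(nra) Hlt) as [y [Hy HAy]].
  exists y. split; [exact Hy|].
  pose proof (opnorm_bound X Y D y HD) as HDy. pose proof (opnorm_bound X Y T y HT) as HTy.
  rewrite Hy, Rmult_1_r in HDy, HTy. fold N in HTy.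
  pose proof (vnorm_add_scal_convex Y t (T y) (D y) ltac:(lra)) as Hconv.
  assert (Htri : vnorm (At y) <= vnorm (T y) + t * vnorm (D y)).
  { unfold At, op_add, op_scal. eapply Rle_trans; [apply vnorm_triangle|].
    rewrite vnorm_scal, Rabs_pos_eq by lra. lra. }
  unfold At, op_add, op_scal in *. split; nra.
Qed.

Hypothesis Hnorming : norming_subsequences_converge X Y T x0.

Lemma support_nonpos_on_kernel D : BL D -> D x0 = vzero -> G D <= 0.
Proof.
  intros HD HDx0. apply Rnot_lt_le. intros He.
  set (N := opn T) in *. set (C := op_add X Y T D).
  assert (Hstep : forall n : nat, exists y, vnorm y = 1 /\
      N - RinvN n * opn D <= vnorm (T y) /\ N + G D / 2 < vnorm (C y)).
  { intros n. apply support_escape; [exact HD | exact He|].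
    split; [apply cond_pos|]. simpl. pose proof (pos_INR n).
    rewrite <- Rinv_1. apply Rinv_le_contravar; lra. }
  destruct (ClassicalEpsilon.choice _ Hstep) as [xs Hxs].
  assert (Hxs_norming : Un_cv (fun n => vnorm (T (xs n))) N).
  { apply (Un_cv_squeeze_below _ (fun n => RinvN n * opn D)).
    - intros n. destruct (Hxs n) as [Hu [Hlow _]]. split; [exact Hlow|].
      pose proof (opnorm_bound X Y T (xs n) HT) as Hup. rewrite Hu, Rmult_1_r in Hup. exact Hup.
    - rewrite <- (Rmult_0_l (opn D)). apply CV_mult; [apply RinvN_cv | apply Un_cv_const]. }
  destruct (Hnorming xs (fun n => proj1 (Hxs n)) Hxs_norming) as [phi [a [_ [Ha Hcv]]]].
  assert (HCa : vnorm (C (vscal a x0)) = N).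
  { unfold C, op_add. destruct HT as [_ [HTs _]]. destruct HD as [_ [HDs _]].
    rewrite HTs, HDs, HDx0, vscal_vzero, vadd_zero, vnorm_scal, Ha, HTx0. ring. }
  assert (Hlim : N + G D / 2 <= N + opn C * 0).
  { apply (@Rle_cv_lim (fun _ => N + G D / 2)
             (fun n => N + opn C * vnorm (vsub (xs (phi n)) (vscal a x0)))).
    - intros n. destruct (Hxs (phi n)) as [_ [_ Hesc]].
      pose proof (vnorm_apply_shift X Y C (xs (phi n)) (vscal a x0)
                    (bounded_linear_add X Y T D HT HD)). lra.
    - apply Un_cv_const.
    - apply CV_plus; [apply Un_cv_const | apply CV_mult; [apply Un_cv_const | exact Hcv]]. }
  lra.
Qed.

Lemma support_eq_of_eq_at B C : BL B -> BL C -> B x0 = C x0 -> G B = G C.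
Proof.
  intros HB HC HBC. destruct HG as [[Ga Gs] _].
  assert (Hdiff : forall U V, BL U -> BL V -> U x0 = V x0 -> G U - G V <= 0).
  { intros U V HU HV HUV.
    assert (HV' : BL (op_scal X Y (-1) V)) by (apply bounded_linear_scal, HV).
    replace (G U - G V) with (G (op_add X Y U (op_scal X Y (-1) V)))
      by (rewrite Ga, Gs by assumption; ring).
    apply support_nonpos_on_kernel; [apply bounded_linear_add; assumption|].
    unfold op_add, op_scal. rewrite HUV. apply vadd_opp. }
  pose proof (Hdiff B C HB HC HBC). pose proof (Hdiff C B HC HB (eq_sym HBC)). lra.
Qed.

Variable g : Y -> R.
Hypothesis Hg : support_functional Y vadd vscal vnorm (fun _ => True) g (T x0).
Hypothesis HN : 0 < opn T.

Lemma eval_support_functional : vnorm x0 = 1 ->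
  support_functional (X -> Y) (op_add X Y) (op_scal X Y) opn BL (fun A => g (A x0)) T.
Proof.
  intros Hx0. destruct Hg as [[ga gs] [_ [Hgd Hgx0]]].
  assert (Hle : forall A, BL A -> Rabs (g (A x0)) <= opn A).
  { intros A HA. eapply Rle_trans; [apply dual_norm1_le_vec; [split; assumption | exact Hgd]|].
    pose proof (opnorm_bound X Y A x0 HA). rewrite Hx0 in *. lra. }
  split; [|split; [|split]].
  - split; intros; [apply ga | apply gs]; exact I.
  - exists 1. intros A HA. rewrite Rmult_1_l. apply Hle, HA.
  - apply Rsup_eq.
    + exists (op_scal X Y (/ opn T) T). split; [apply bounded_linear_scal, HT|]. split.
      * eapply Rle_trans; [apply opnorm_scal_le, HT|].
        rewrite Rabs_pos_eq, Rinv_l by (try (left; apply Rinv_0_lt_compat); lra). lra.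
      * unfold op_scal. rewrite gs, Hgx0, HTx0, Rinv_l, Rabs_R1 by (auto; lra). reflexivity.
    + intros r [A [HA [HA1 ->]]]. eapply Rle_trans; [apply Hle, HA | exact HA1].
  - rewrite Hgx0. exact HTx0.
Qed.

Let phi (x : X) : R := g (T x) / opn T.

Lemma phi_add u v : phi (vadd u v) = phi u + phi v.
Proof.
  destruct Hg as [[ga _] _]. destruct HT as [Ta _].
  unfold phi. rewrite Ta, ga by exact I. field. lra.
Qed.

Lemma phi_scal a u : phi (vscal a u) = a * phi u.
Proof.
  destruct Hg as [[_ gs] _]. destruct HT as [_ [Ts _]].
  unfold phi. rewrite Ts, gs by exact I. field. lra.
Qed.

Lemma phi_le x : Rabs (phi x) <= vnorm x.
Proof.
  destruct Hg as [Hl [_ [Hd _]]]. unfold phi, Rdiv.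
  rewrite Rabs_mult, (Rabs_pos_eq (/ opn T)) by (left; apply Rinv_0_lt_compat, HN).
  pose proof (dual_norm1_le_vec Y g (T x) Hl Hd). pose proof (opnorm_bound X Y T x HT).
  apply (Rmult_le_reg_r (opn T)); [exact HN|]. rewrite Rmult_assoc, Rinv_l by lra. nra.
Qed.

Lemma rank_one_phi_x0 z : rank_one X Y phi z x0 = z.
Proof.
  destruct Hg as [_ [_ [_ Hgx0]]]. unfold rank_one, phi.
  rewrite Hgx0, HTx0. unfold Rdiv. rewrite Rinv_r by lra. apply vscal_one.
Qed.

Lemma support_factor B : BL B -> G B = G (rank_one X Y phi (B x0)).
Proof.
  intros HB. apply support_eq_of_eq_at; [exact HB | |].
  - apply rank_one_bounded_linear; [exact phi_add | exact phi_scal | exact phi_le].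
  - symmetry. apply rank_one_phi_x0.
Qed.

Lemma support_pullback :
  support_functional Y vadd vscal vnorm (fun _ => True) (fun z => G (rank_one X Y phi z)) (T x0).
Proof.
  destruct HG as [[Ga Gs] [_ [Hd GT]]].
  assert (HR : forall z, BL (rank_one X Y phi z))
    by (intros; apply rank_one_bounded_linear; [exact phi_add | exact phi_scal | exact phi_le]).
  assert (Hle : forall z, Rabs (G (rank_one X Y phi z)) <= vnorm z).
  { intros z. eapply Rle_trans; [apply (dual_norm1_le_op X Y G); [split | |]; auto|].
    apply opnorm_rank_one_le, phi_le. }
  split; [|split; [|split]].
  - split; intros.
    + rewrite rank_one_add. apply Ga; apply HR.
    + rewrite rank_one_scal. apply Gs, HR.
  - exists 1. intros z _. rewrite Rmult_1_l. apply Hle.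
  - apply Rsup_eq.
    + exists (vscal (/ opn T) (T x0)). split; [exact I|]. split.
      * rewrite vnorm_scal, Rabs_pos_eq, HTx0, Rinv_l
          by (try (left; apply Rinv_0_lt_compat); lra). lra.
      * rewrite rank_one_scal, Gs, <- (support_factor T HT), GT, Rinv_l, Rabs_R1
          by (try apply HR; lra). reflexivity.
    + intros r [z [_ [Hz ->]]]. eapply Rle_trans; [apply Hle | exact Hz].
  - rewrite <- (support_factor T HT), GT. symmetry. exact HTx0.
Qed.
End SupportFunctionals.

Theorem theorem3p4 (X Y : NormedSpace) (T : X -> Y) (x0 : X) :
  bounded_linear X Y T ->
  vnorm x0 = 1 ->
  (forall x : X, norm_attainment_set X Y T x <-> (x = x0 \/ x = vscal (-1) x0)) ->
  smooth_point Y (T x0) ->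
  (forall xs : nat -> X,
     (forall n, vnorm (xs n) = 1) ->
     Un_cv (fun n => vnorm (T (xs n))) (opnorm X Y T) ->
     exists (phi : nat -> nat) (a : R),
       (forall n, (phi n < phi (S n))%nat) /\ Rabs a = 1 /\
       Un_cv (fun n => vnorm (vsub (xs (phi n)) (vscal a x0))) 0) ->
  smooth_operator X Y T.
Proof.
  intros HT Hx0 HM [_ [HTx0_nz [g [Hg Hg_unique]]]] Hnorming.
  assert (HTx0 : vnorm (T x0) = opnorm X Y T) by (apply HM; left; reflexivity).
  assert (HN : 0 < opnorm X Y T) by (rewrite <- HTx0; apply vnorm_pos, HTx0_nz).
  split; [exact HT|]. split.
  - intros HT0. apply HTx0_nz. exact (equal_f HT0 x0).
  - exists (fun A => g (A x0)). split; [apply eval_support_functional; assumption|].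
    intros G HG B HB.
    rewrite (support_factor _ _ _ _ HT HTx0 _ HG Hnorming _ Hg HN B HB).
    exact (Hg_unique _ (support_pullback _ _ _ _ HT HTx0 _ HG Hnorming _ Hg HN) _ I).
Qed.
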